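(* In the odd setting below, for all $i,j\in\{1,\dots,n\}$ and $\ell\in\{0,\dots,s-1\}$, the determinant $D^j_{2\ell+1,i}$ is homogeneous of degree $-1+\ell/s$.
   Context: Odd setting: integers $n\ge1$, $s\ge1$, $m=2s+1$; $a_k^0,\dots,a_k^{2s}$ are $n\times n$ matrices with indeterminate entries, $N$-periodic in $k$. $Q_k$ is the $mn\times mn$ block matrix with $I_n$ in blocks $(i+1,i)$, last block column $(a_k^0;\dots;a_k^{2s})$, $O_n$ elsewhere. $r_k=(a_k^0;O_n;a_k^2;O_n;\dots;O_n;a_k^{2s})$. $F^{(k)}_0=r_k$, $F^{(k)}_\ell=Q_k\cdots Q_{k+\ell-1}r_{k+\ell}$ ($mn\times n$), $N_k=(F^{(k)}_0,\dots,F^{(k)}_{2s})$. For $0\le \rho\le 2s$, $D^j_{\rho,i}$ (for a fixed $k$) is the determinant of the matrix obtained from $N_k$ by replacing the $i$-th column of the block column $F^{(k)}_\rho$ by the $j$-th column of $F^{(k)}_{2s+1}$. The scaling, for $\mu>0$: $a^{2r+1}\mapsto\mu^{-1+r/s}a^{2r+1}$ ($r=0,\dots,s-1$), $a^{2r}\mapsto\mu^{r/s}a^{2r}$ ($r=0,\dots,s$); homogeneous of degree $d$ means multiplied by $\mu^d$. *)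

From HB Require Import structures.
From mathcomp Require Import all_boot all_order all_algebra.
Set Implicit Arguments. Unset Strict Implicit. Unset Printing Implicit Defensive.
Import Order.TTheory GRing.Theory Num.Theory.
Local Open Scope ring_scope.

(* Odd setting: m = 2s+1.  Coefficient family: a k r = a_k^r (n x n),
   k : nat (time index, N-periodic), r : 'I_(2s+1).
   An mn x mn (resp. mn x n) matrix is indexed by p : 'I_(m*n); p lies in
   block row p %/ n (0-based), row p %% n inside that block.            *)

Definition msz (s : nat) : nat := s.*2.+1.

(* Block decomposition of an index p : 'I_(m*n) as (block, position):
   p = block * n + position (lexicographic enumeration of 'I_m * 'I_n). *)
Definition bix (m n : nat) (p : 'I_(m * n)) : 'I_m * 'I_n :=
  enum_val (cast_ord (esym (mxvec_cast m n)) p).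

Definition Qmx (R : fieldType) (n s : nat) (a : nat -> 'I_(msz s) -> 'M[R]_n)
  (k : nat) : 'M[R]_(msz s * n) :=
  \matrix_(p, q)
    let: (bp, rp) := bix p in let: (bq, rq) := bix q in
    if (val bq == (msz s).-1)%N then a k bp rp rq
    else if (val bp == (val bq).+1)%N then ((rp == rq))%:R else 0.

Definition rmx (R : fieldType) (n s : nat) (a : nat -> 'I_(msz s) -> 'M[R]_n)
  (k : nat) : 'M[R]_(msz s * n, n) :=
  \matrix_(p, j)
    let: (bp, rp) := bix p in if ~~ odd bp then a k bp rp j else 0.

Fixpoint Qprod (R : fieldType) (n s : nat) (a : nat -> 'I_(msz s) -> 'M[R]_n)
  (k l : nat) : 'M[R]_(msz s * n) :=
  match l with
  | O => 1%:M
  | l'.+1 => Qprod a k l' *m Qmx a (k + l')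
  end.

Definition Fmx (R : fieldType) (n s : nat) (a : nat -> 'I_(msz s) -> 'M[R]_n)
  (k l : nat) : 'M[R]_(msz s * n, n) :=
  Qprod a k l *m rmx a (k + l).

Definition Nmx (R : fieldType) (n s : nat) (a : nat -> 'I_(msz s) -> 'M[R]_n)
  (k : nat) : 'M[R]_(msz s * n) :=
  \matrix_(p, q) Fmx a k (val (bix q).1) p (bix q).2.

(* D^j_{rho,i}: determinant of N_k with the i-th column of block column F_rho
   replaced by the j-th column of F_{2s+1}  (i, j are 0-based in 'I_n). *)
Definition Ddet (R : fieldType) (n s : nat) (a : nat -> 'I_(msz s) -> 'M[R]_n)
  (k rho : nat) (i j : 'I_n) : R :=
  \det (\matrix_(p, q) if (val (bix q).1 == rho) && ((bix q).2 == i)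
                      then Fmx a k (msz s) p j
                      else Nmx a k p q).

(* The scaling with mu = t^s (t > 0):
   a^{2r+1} -> mu^{-1+r/s} a^{2r+1} = t^r / t^s a^{2r+1},
   a^{2r}   -> mu^{r/s}    a^{2r}   = t^r a^{2r}. *)
Definition scale_coef (R : fieldType) (n s : nat) (t : R)
  (a : nat -> 'I_(msz s) -> 'M[R]_n) : nat -> 'I_(msz s) -> 'M[R]_n :=
  fun k r => (if odd r then t ^+ (r./2) / t ^+ s else t ^+ (r./2)) *: a k r.

From HB Require Import structures.
From mathcomp Require Import all_boot all_order all_algebra.
From mathcomp Require Import zify.
Import Order.TTheory GRing.Theory Num.Theory.
Set Implicit Arguments. Unset Strict Implicit. Unset Printing Implicit Defensive.
Local Open Scope ring_scope.

(* The block columns of Q_k ... Q_{k+l-1} are the identity columns followed by a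
   sequence X_p obeying the companion recurrence X_{j+m} = sum_b X_{j+b} a_{k+j}^b,
   and F_l is a combination of the X_p with coefficients a_{k+l}^b.  Keeping the
   X_p with p >= m as unknowns, D is the determinant of the 2mn x 2mn matrix of
   the F-relations and the recurrences (eliminating the unknowns recovers N_k),
   whose nonzero entries are 1 or single entries of the a_k^b.  Under the scaling
   a^b -> t^(b/2 - s [b odd]) a^b, after cancelling the even offsets of the
   recurrence columns against the F-columns, every entry (p, q) of that matrix is
   multiplied by t^(w p + v q) for integer weights w, v, so the determinant is
   multiplied by t^(sum w + sum v) = t^(l - s); with t = mu^(1/s) this is
   mu^(-1 + l/s). *)

Lemma nth_allpairs_pair (T1 T2 : Type) (x1 : T1) (x2 : T2) (s1 : seq T1) (s2 : seq T2) i j :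
  (i < size s1)%N -> (j < size s2)%N ->
  nth (x1, x2) [seq (y1, y2) | y1 <- s1, y2 <- s2] (i * size s2 + j) =
  (nth x1 s1 i, nth x2 s2 j).
Proof.
elim: s1 i => [|y s1 IH] [|i] //= hi hj.
  by rewrite nth_cat size_map hj (nth_map x2).
by rewrite nth_cat size_map mulSn -addnA ltnNge leq_addr /= addKn IH.
Qed.

Lemma val_mxvec_index m n (b : 'I_m) (r : 'I_n) : val (mxvec_index b r) = (b * n + r)%N.
Proof.
have hlt : (b * n + r < #|{: 'I_m * 'I_n}|)%N.
  by rewrite card_prod !card_ord; have := ltn_ord b; have := ltn_ord r; nia.
have he : enum_val (Ordinal hlt) = (b, r).
  rewrite (enum_val_nth (b, r)) /= enumT unlock /=.
  have := @nth_allpairs_pair _ _ b r (enum 'I_m) (enum 'I_n) b r.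
  rewrite !size_enum_ord => ->; try exact: ltn_ord.
  by congr pair; apply: val_inj; rewrite /= nth_enum_ord.
by rewrite /mxvec_index -he enum_valK.
Qed.

Section BlockIndex.
Variables m n : nat.
Implicit Types q : 'I_(m * n).

Definition blk q : nat := val (bix q).1.
Definition pos q : 'I_n := (bix q).2.

Lemma bix_mxvec_index (b : 'I_m) (r : 'I_n) : bix (mxvec_index b r) = (b, r).
Proof. by rewrite /bix /mxvec_index cast_ordK enum_rankK. Qed.

Lemma mxvec_index_bix q : mxvec_index (bix q).1 (bix q).2 = q.
Proof. by case/mxvec_indexP: q => b r; rewrite bix_mxvec_index. Qed.

Lemma blk_mxvec_index (b : 'I_m) (r : 'I_n) : blk (mxvec_index b r) = b.
Proof. by rewrite /blk bix_mxvec_index. Qed.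

Lemma pos_mxvec_index (b : 'I_m) (r : 'I_n) : pos (mxvec_index b r) = r.
Proof. by rewrite /pos bix_mxvec_index. Qed.

Lemma ltn_blk q : (blk q < m)%N.
Proof. exact: ltn_ord. Qed.

Lemma bix_inj : injective (@bix m n).
Proof. by move=> q q' e; rewrite -[q]mxvec_index_bix -[q']mxvec_index_bix e. Qed.

Lemma eq_bix q q' : (q == q') = (blk q == blk q') && (pos q == pos q').
Proof.
rewrite -(inj_eq bix_inj) /blk /pos.
by case: (bix q) => b r; case: (bix q') => b' r'.
Qed.

Lemma val_bix q : val q = (blk q * n + pos q)%N.
Proof. by rewrite -{1}[q]mxvec_index_bix val_mxvec_index. Qed.

Lemma ltn_bix q q' : (q < q')%N ->
  (blk q <= blk q')%N /\ (blk q = blk q' -> (pos q < pos q')%N).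
Proof.
rewrite !val_bix => h; have := ltn_ord (pos q); have := ltn_ord (pos q').
by split; [nia | move=> e; rewrite e in h; lia].
Qed.

Lemma big_bix (V : nmodType) (F : 'I_(m * n) -> V) :
  \sum_q F q = \sum_(b < m) \sum_(r < n) F (mxvec_index b r).
Proof.
rewrite pair_big /= (reindex (fun p : 'I_m * 'I_n => mxvec_index p.1 p.2)) //=.
exists (@bix m n) => [[b r] _ | q _] /=; first by rewrite bix_mxvec_index.
exact: mxvec_index_bix.
Qed.

End BlockIndex.

Lemma big_ord_window (V : nmodType) (F : nat -> V) N L w :
  (forall p, ((p < L)%N || (L + w <= p)%N) -> F p = 0) -> (L + w <= N)%N ->
  \sum_(p < N) F p = \sum_(b < w) F (L + b)%N.
Proof.
move=> hF hN; rewrite -(big_mkord xpredT) (big_cat_nat (n:=L)) /=; [|lia|lia].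
rewrite (big_cat_nat (n:=L + w) (m:=L)) /=; [|lia|lia].
rewrite [X in X + _]big1_seq ?add0r; last first.
  by move=> p; rewrite mem_index_iota => h; apply: hF; lia.
rewrite [X in _ + X]big1_seq ?addr0; last first.
  by move=> p; rewrite mem_index_iota => h; apply: hF; lia.
rewrite -{1}[L]add0n big_addn addKn big_mkord; apply: eq_bigr => b _.
by rewrite addnC.
Qed.

Section Companion.
Variables (R : fieldType) (n s : nat).
Local Notation m := (msz s).

Definition Eblk (c : nat) : 'M[R]_(m * n, n) :=
  \matrix_(q, r) ((blk q == c) && (pos q == r))%:R.

Lemma EblkE c (hc : (c < m)%N) q r : Eblk c q r = (q == mxvec_index (@inord s.*2 c) r)%:R.
Proof. by rewrite mxE eq_bix blk_mxvec_index pos_mxvec_index inordK. Qed.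

Lemma Eblk_blk (q q' : 'I_(m * n)) : Eblk (blk q') q (pos q') = (q == q')%:R.
Proof. by rewrite mxE eq_bix. Qed.

Lemma mulmx_Eblk p (A : 'M[R]_(p, m * n)) c (hc : (c < m)%N) i r :
  (A *m Eblk c) i r = A i (mxvec_index (@inord s.*2 c) r).
Proof.
rewrite mxE (bigD1 (mxvec_index (@inord s.*2 c) r)) //= EblkE // eqxx mulr1.
by rewrite big1 ?addr0 // => q hq; rewrite EblkE // (negbTE hq) mulr0.
Qed.

Lemma mul_Eblk_mx p (A : 'M[R]_(n, p)) c q j :
  (Eblk c *m A) q j = if blk q == c then A (pos q) j else 0.
Proof.
rewrite mxE; case: eqP => hb.
  rewrite (bigD1 (pos q)) //= mxE hb !eqxx mul1r big1 ?addr0 // => r hr.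
  by rewrite mxE hb eqxx /= eq_sym (negbTE hr) mul0r.
by rewrite big1 // => r _; rewrite mxE; move/eqP: hb => /negbTE ->; rewrite mul0r.
Qed.

Lemma sum_Eblk_mul (A : 'I_m -> 'M[R]_n) (P : pred 'I_m) q j :
  (\sum_(b < m | P b) Eblk b *m A b) q j = if P (bix q).1 then A (bix q).1 (pos q) j else 0.
Proof.
rewrite summxE; case: ifP => hP.
  rewrite (bigD1 (bix q).1) //= mul_Eblk_mx eqxx big1 ?addr0 // => b /andP[_ hb].
  by rewrite mul_Eblk_mx /blk; case: eqP => // h; case/eqP: hb; apply: val_inj.
rewrite big1 // => b hb; rewrite mul_Eblk_mx /blk; case: eqP => // h.
by move: hP; rewrite (_ : (bix q).1 = b) ?hb //; apply: val_inj.
Qed.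

Variable a : nat -> 'I_m -> 'M[R]_n.

Lemma Qmx_Eblk k c : (c < s.*2)%N -> Qmx a k *m Eblk c = Eblk c.+1.
Proof.
move=> hc; apply/matrixP => q r; rewrite mulmx_Eblk; last by rewrite /msz; lia.
rewrite mxE bix_mxvec_index /= inordK; last by rewrite /msz; lia.
rewrite mxE /blk /pos; case: (bix q) => bq rq /=.
by rewrite ifN ?neq_ltn ?hc //; case: eqP.
Qed.

Lemma Qmx_Eblk_last k : Qmx a k *m Eblk s.*2 = \sum_(b < m) Eblk b *m a k b.
Proof.
apply/matrixP => q r; rewrite mulmx_Eblk // sum_Eblk_mul mxE bix_mxvec_index /pos.
by case: (bix q) => bq rq; rewrite [val _]inordK // eqxx.
Qed.

Lemma rmx_sum k : rmx a k = \sum_(b < m | ~~ odd b) Eblk b *m a k b.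
Proof. by apply/matrixP => q r; rewrite sum_Eblk_mul mxE /pos; case: (bix q). Qed.

Definition Xcol k (p : nat) : 'M[R]_(m * n, n) :=
  Qprod a k (p - s.*2) *m Eblk (minn p s.*2).

Lemma Xcol_small k p : (p <= s.*2)%N -> Xcol k p = Eblk p.
Proof.
move=> hp; rewrite /Xcol (_ : (p - s.*2 = 0)%N) ?mul1mx; last by lia.
by congr Eblk; lia.
Qed.

Lemma Qprod_Eblk k l c : (c <= s.*2)%N -> Qprod a k l *m Eblk c = Xcol k (l + c).
Proof.
elim: l c => [|l IH] c hc; first by rewrite add0n Xcol_small //= mul1mx.
rewrite /= -mulmxA.
have [hlt|->] : (c < s.*2)%N \/ c = s.*2 by lia.
  by rewrite Qmx_Eblk // IH; [congr Xcol; lia | lia].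
rewrite /Xcol (_ : (l.+1 + s.*2 - s.*2 = l.+1)%N); last by lia.
by rewrite (_ : minn (l.+1 + s.*2) s.*2 = s.*2) /= ?mulmxA //; lia.
Qed.

Lemma Xcol_rec k j : Xcol k (j + m) = \sum_(b < m) Xcol k (j + b) *m a (k + j) b.
Proof.
rewrite (_ : Xcol k (j + m) = Qprod a k j.+1 *m Eblk s.*2); last first.
  by rewrite /Xcol /msz; congr (Qprod _ _ _ *m Eblk _); lia.
rewrite /= -mulmxA Qmx_Eblk_last mulmx_sumr; apply: eq_bigr => b _.
by rewrite mulmxA Qprod_Eblk //; have := ltn_ord b; rewrite /msz; lia.
Qed.

Lemma Fmx_Xcol k L : Fmx a k L = \sum_(b < m | ~~ odd b) Xcol k (L + b) *m a (k + L) b.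
Proof.
rewrite /Fmx rmx_sum mulmx_sumr; apply: eq_bigr => b _.
by rewrite mulmxA Qprod_Eblk //; have := ltn_ord b; rewrite /msz; lia.
Qed.

End Companion.

Section Linearization.
Variables (R : fieldType) (n s : nat) (a : nat -> 'I_(msz s) -> 'M[R]_n) (k : nat).
Local Notation m := (msz s).
Local Notation Xk := (Xcol a k).

Definition Fcoef (L p : nat) (r c : 'I_n) : R :=
  if (L <= p)%N && (p - L <= s.*2)%N && ~~ odd (p - L)
  then a (k + L) (@inord s.*2 (p - L)) r c else 0.

Definition Rcoef (j p : nat) (r c : 'I_n) : R :=
  if p == (j + m)%N then (r == c)%:R
  else if (j <= p)%N && (p - j <= s.*2)%N then - a (k + j) (@inord s.*2 (p - j)) r c
  else 0.

Lemma sum_Fcoef L q c : (L <= m)%N ->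
  \sum_(p < m + m) \sum_(r < n) Xk p q r * Fcoef L p r c = Fmx a k L q c.
Proof.
move=> hL.
rewrite (@big_ord_window _ (fun p => \sum_(r < n) Xk p q r * Fcoef L p r c) _ L m);
  first last; first by lia.
  move=> p hp; rewrite big1 // => r _; rewrite /Fcoef.
  by rewrite (_ : (L <= p)%N && (p - L <= s.*2)%N = false) ?mulr0 //; rewrite /msz in hp; lia.
rewrite Fmx_Xcol summxE (bigID (fun b : 'I_m => ~~ odd b)) /=.
rewrite [X in _ + X]big1 ?addr0 => [|b /negbNE hb].
  apply: eq_bigr => b hb; rewrite mxE; apply: eq_bigr => r _.
  by rewrite /Fcoef addKn hb leq_addr -ltnS ltn_ord inord_val.
by rewrite big1 // => r _; rewrite /Fcoef addKn hb andbF mulr0.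
Qed.

Lemma sum_Rcoef j q c : (j <= s.*2)%N ->
  \sum_(p < m + m) \sum_(r < n) Xk p q r * Rcoef j p r c = 0.
Proof.
move=> hj.
rewrite (@big_ord_window _ (fun p => \sum_(r < n) Xk p q r * Rcoef j p r c) _ j m.+1);
  first last; first by rewrite /msz; lia.
  move=> p hp; rewrite big1 // => r _; rewrite /Rcoef.
  rewrite (_ : (p == j + m)%N = false); last by apply/eqP; rewrite /msz in hp *; lia.
  by rewrite (_ : (j <= p)%N && (p - j <= s.*2)%N = false) ?mulr0 //; rewrite /msz in hp; lia.
rewrite big_ord_recr /=.
have -> : \sum_(r < n) Xk (j + m) q r * Rcoef j (j + m) r c = Xk (j + m) q c.
  rewrite (bigD1 c) //= /Rcoef !eqxx mulr1 big1 ?addr0 // => r hr.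
  by rewrite (negbTE hr) mulr0.
rewrite Xcol_rec summxE -big_split big1 //= => b _.
rewrite mxE -big_split big1 //= => r _.
rewrite /Rcoef addKn leq_addr eqn_add2l (ltn_eqF (ltn_ord b)) -ltnS ltn_ord /=.
by rewrite inord_val mulrN addNr.
Qed.

Lemma blk_le (q : 'I_(m * n)) : (blk q <= s.*2)%N.
Proof. exact: ltn_blk q. Qed.

Definition rowblk (off : nat) (C : nat -> 'I_n -> 'I_(m * n) -> R) : 'M[R]_(m * n) :=
  \matrix_(q, q') C (blk q + off)%N (pos q) q'.

Definition Xmx : 'M[R]_(m * n) := \matrix_(q, q') Xk (blk q' + m) q (pos q').

Lemma rowblk_Xmx C : rowblk 0 C + Xmx *m rowblk m C =
  \matrix_(q, q') \sum_(p < m + m) \sum_(r < n) Xk p q r * C p r q'.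
Proof.
apply/matrixP => q q'; rewrite mxE [in RHS]mxE big_split_ord /=; congr (_ + _).
  transitivity (\sum_(q'' : 'I_(m * n)) Xk (blk q'') q (pos q'') * C (blk q'') (pos q'') q');
    last first.
    rewrite big_bix; apply: eq_bigr => b _; apply: eq_bigr => r _.
    by rewrite blk_mxvec_index pos_mxvec_index.
  rewrite mxE (bigD1 q) //= Xcol_small ?blk_le // Eblk_blk eqxx mul1r addn0.
  rewrite big1 ?addr0 // => q'' h.
  by rewrite Xcol_small ?blk_le // Eblk_blk eq_sym (negbTE h) mul0r.
rewrite mxE big_bix; apply: eq_bigr => b _; apply: eq_bigr => r _.
by rewrite !mxE blk_mxvec_index pos_mxvec_index addnC.
Qed.

Variables (rho : nat) (i j : 'I_n).

Definition qrep : 'I_(m * n) := mxvec_index (@inord s.*2 rho) i.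
Definition Fidx (q : 'I_(m * n)) : nat := if q == qrep then m else blk q.
Definition Fcol (q : 'I_(m * n)) : 'I_n := if q == qrep then j else pos q.

Lemma Fidx_le q : (Fidx q <= m)%N.
Proof. by rewrite /Fidx; case: eqP => // _; exact: ltnW (ltn_blk q). Qed.

Lemma Ddet_Fidx : (rho < m)%N ->
  Ddet a k rho i j = \det (\matrix_(p, q) Fmx a k (Fidx q) p (Fcol q)).
Proof.
move=> hr; congr (\det _); apply/matrixP => p q.
rewrite !mxE /Fidx /Fcol eq_bix /qrep blk_mxvec_index pos_mxvec_index inordK //.
by rewrite /blk /pos; case: ifP => _ //; rewrite mxE.
Qed.

Definition Gmx off := rowblk off (fun p r q' => Fcoef (Fidx q') p r (Fcol q')).
Definition Hmx off := rowblk off (fun p r q' => Rcoef (blk q') p r (pos q')).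

(* [Lmx] is a linearization of the matrix of [Ddet]: its entries are entries of the
   coefficients a, and [block_mx 1 Xmx 0 1 *m Lmx] is block lower triangular. *)
Definition Lmx := block_mx (Gmx 0) (Hmx 0) (Gmx m) (Hmx m).

Lemma det_Hmx : \det (Hmx m) = 1.
Proof.
rewrite -det_tr det_trig; first by rewrite big1 // => q _; rewrite !mxE /Rcoef !eqxx.
apply/is_trig_mxP => q q' hlt; rewrite !mxE /Rcoef.
have [hb hp] := ltn_bix hlt.
case: eqP => [e|_].
  by have := hp ltac:(lia); case: eqP => // ->; rewrite ltnn.
by rewrite ifF //; have hm : m = s.*2.+1 by []; lia.
Qed.

Lemma det_Lmx : (rho < m)%N -> \det Lmx = Ddet a k rho i j.
Proof.
move=> hr; rewrite Ddet_Fidx //.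
rewrite -[LHS](_ : \det (block_mx 1 Xmx 0 1 *m Lmx) = _); last first.
  by rewrite det_mulmx det_ublock !det1 !mul1r.
rewrite mulmx_block !mul1mx !mul0mx !add0r /Gmx /Hmx !rowblk_Xmx.
rewrite [X in block_mx _ X _ _](_ : _ = 0); last first.
  by apply/matrixP => q q'; rewrite !mxE sum_Rcoef // blk_le.
rewrite det_lblock det_Hmx mulr1; congr (\det _); apply/matrixP => q q'.
by rewrite [LHS]mxE [RHS]mxE sum_Fcoef ?Fidx_le.
Qed.

End Linearization.

Definition scale_exp (s b : nat) : int := (b./2)%:Z - (s * odd b)%:Z.

Definition wt (s p : nat) : int := (p./2)%:Z + (s.+1)%:Z * (odd p)%:Z.

Lemma odd_msz s : odd (msz s).
Proof. by rewrite /msz /= odd_double. Qed.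

Lemma scale_exp_msz s : scale_exp s (msz s) = 0.
Proof. by rewrite /scale_exp /msz /= uphalf_double odd_double /= muln1 subrr. Qed.

Lemma wtD_even s L b : ~~ odd b -> wt s (L + b) = wt s L + (b./2)%:Z.
Proof.
move=> hb; rewrite /wt halfD oddD (negbTE hb) andbF addbF add0n PoszD.
by rewrite -!addrA [X in _ + X]addrC.
Qed.

Definition colwt (s j : nat) : int := - wt s j - (msz s)%:Z * (~~ odd j)%:Z.

Lemma wtD_odd s L b : odd b -> wt s (L + b) + colwt s L = scale_exp s b.
Proof.
move=> hb; rewrite /colwt /wt /scale_exp /msz halfD oddD hb andbT addbT.
by case: (odd L) => /=; rewrite ?muln1; lia.
Qed.

Lemma wt_msz_sub s rho : odd rho -> wt s rho - wt s (msz s) = (rho./2)%:Z - s%:Z.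
Proof. by move=> ho; rewrite /wt /msz /= uphalf_double odd_double ho /=; lia. Qed.

Section Scaling.
Variables (R : fieldType) (t : R).
Hypothesis ht : t != 0.

Lemma mulr_expz_entry (x y e : int) (v : R) :
  (v != 0 -> x + y = e) -> t ^ x * v * t ^ y = t ^ e * v.
Proof.
have [->|nz] := eqVneq v 0; first by rewrite !mulr0 mul0r.
by move=> /(_ isT) <-; rewrite mulrAC -expfzDr.
Qed.

Variables (n s : nat) (a : nat -> 'I_(msz s) -> 'M[R]_n) (k : nat).
Local Notation m := (msz s).
Local Notation at_ := (scale_coef t a).

Lemma scale_coefE k' (b : 'I_m) : at_ k' b = t ^ scale_exp s b *: a k' b.
Proof.
rewrite /scale_coef /scale_exp; case: (odd b) => /=; last by rewrite muln0 subr0 exprnP.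
by rewrite muln1 expfzDr // -invr_expz -!exprnP.
Qed.

Lemma Fcoef_scale L p r c :
  Fcoef at_ k L p r c = t ^ scale_exp s (p - L) * Fcoef a k L p r c.
Proof.
rewrite /Fcoef; case: ifP => [/andP[/andP[_ h] _]|_]; last by rewrite mulr0.
by rewrite scale_coefE mxE inordK.
Qed.

Lemma Rcoef_scale j p r c :
  Rcoef at_ k j p r c = t ^ scale_exp s (p - j) * Rcoef a k j p r c.
Proof.
rewrite /Rcoef; case: eqP => [->|_]; first by rewrite addKn scale_exp_msz mul1r.
case: ifP => [/andP[_ h]|_]; last by rewrite mulr0.
by rewrite scale_coefE mxE inordK ?mulrN.
Qed.

Lemma Fcoef_wt L p r c :
  t ^ wt s p * Fcoef a k L p r c * t ^ (- wt s L) =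
  t ^ scale_exp s (p - L) * Fcoef a k L p r c.
Proof.
apply: mulr_expz_entry; rewrite /Fcoef.
case: ifP => [/andP[/andP[h1 _] h3] _|]; last by rewrite eqxx.
rewrite -{1}(subnKC h1) wtD_even // /scale_exp (negbTE h3) muln0 subr0.
by rewrite addrAC subrr add0r.
Qed.

(* The even offsets cancel in [Fcoef + Rcoef]; no row weight fits both parities. *)
Lemma FRcoef_wt j p r c :
  t ^ wt s p * (Fcoef a k j p r c + Rcoef a k j p r c) * t ^ colwt s j
  = t ^ scale_exp s (p - j) * (Fcoef a k j p r c + Rcoef a k j p r c).
Proof.
apply: mulr_expz_entry; rewrite /Fcoef /Rcoef.
have [->|hp] := eqVneq p (j + m)%N; first by rewrite addKn wtD_odd ?odd_msz.
case hA: ((j <= p)%N && (p - j <= s.*2)%N); last by rewrite /= addr0 eqxx.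
move: hA => /andP[h1 h2]; case ho: (odd (p - j)).
  by move=> _; rewrite -{1}(subnKC h1) wtD_odd.
by rewrite /= addrN eqxx.
Qed.

Lemma Rcoef_wt_odd j p r c : odd j ->
  t ^ wt s p * Rcoef a k j p r c * t ^ colwt s j
  = t ^ scale_exp s (p - j) * Rcoef a k j p r c.
Proof.
move=> hj; apply: mulr_expz_entry; rewrite /Rcoef.
have [->|hp] := eqVneq p (j + m)%N; first by rewrite addKn wtD_odd ?odd_msz.
case: ifP => [/andP[h1 h2] _|]; last by rewrite eqxx.
rewrite -{1}(subnKC h1); case ho: (odd (p - j)); first by rewrite wtD_odd.
rewrite wtD_even ?ho // /colwt hj /= mulr0 subr0 /scale_exp ho muln0 subr0.
lia.
Qed.

End Scaling.

Lemma diag_mul_mx_diag (R : pzRingType) N (d e : 'rV[R]_N) (A : 'M[R]_N) q q' :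
  (diag_mx d *m A *m diag_mx e) q q' = d 0 q * A q q' * e 0 q'.
Proof. by rewrite mul_diag_mx mul_mx_diag !mxE. Qed.

Section ScaledLinearization.
Variables (R : fieldType) (t : R).
Hypothesis ht : t != 0.
Variables (n s : nat) (a : nat -> 'I_(msz s) -> 'M[R]_n) (k rho : nat) (i j : 'I_n).
Hypotheses (rho_odd : odd rho) (rho_lt : (rho < msz s)%N).
Local Notation m := (msz s).
Local Notation at_ := (scale_coef t a).

Definition Jmx : 'M[R]_(m * n) := diag_mx (\row_q (q != qrep s rho i)%:R).

Lemma mulmx_JmxE (A : 'M[R]_(m * n)) q q' :
  (A *m Jmx) q q' = if q' == qrep s rho i then 0 else A q q'.
Proof. by rewrite mul_mx_diag !mxE; case: eqP; rewrite ?mulr0 ?mulr1. Qed.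

(* Adding [Gmx *m Jmx] to [Hmx] cancels the even offsets of the recurrence
   coefficients in every column but [qrep], where the offsets are harmless since
   [rho] is odd. *)
Definition Vmx b := Lmx b k rho i j *m block_mx 1 Jmx 0 1.

Lemma Vmx_block b : Vmx b =
  block_mx (Gmx b k rho i j 0) (Gmx b k rho i j 0 *m Jmx + Hmx b k 0)
           (Gmx b k rho i j m) (Gmx b k rho i j m *m Jmx + Hmx b k m).
Proof. by rewrite /Vmx /Lmx mulmx_block !mulmx1 !mulmx0 !addr0. Qed.

Lemma det_Vmx b : \det (Vmx b) = \det (Lmx b k rho i j).
Proof. by rewrite /Vmx det_mulmx det_ublock !det1 !mulr1. Qed.

Definition roww off : 'rV[R]_(m * n) := \row_q t ^ wt s (blk q + off).
Definition colwF : 'rV[R]_(m * n) := \row_q t ^ (- wt s (Fidx rho i q)).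
Definition colwR : 'rV[R]_(m * n) := \row_q t ^ colwt s (blk q).

Lemma Gmx_scale off :
  Gmx at_ k rho i j off = diag_mx (roww off) *m Gmx a k rho i j off *m diag_mx colwF.
Proof. by apply/matrixP => q q'; rewrite diag_mul_mx_diag !mxE Fcoef_scale // Fcoef_wt. Qed.

Lemma GHmx_scale off :
  Gmx at_ k rho i j off *m Jmx + Hmx at_ k off =
  diag_mx (roww off) *m (Gmx a k rho i j off *m Jmx + Hmx a k off) *m diag_mx colwR.
Proof.
apply/matrixP => q q'; rewrite diag_mul_mx_diag [LHS]mxE [X in _ * X * _]mxE !mulmx_JmxE !mxE.
rewrite /Fidx /Fcol; case: eqP => [->|_].
  by rewrite !add0r Rcoef_scale // Rcoef_wt_odd // /qrep blk_mxvec_index inordK.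
by rewrite Fcoef_scale // Rcoef_scale // -mulrDr FRcoef_wt.
Qed.

Lemma Vmx_scale : Vmx at_ =
  block_mx (diag_mx (roww 0)) 0 0 (diag_mx (roww m)) *m Vmx a
    *m block_mx (diag_mx colwF) 0 0 (diag_mx colwR).
Proof.
rewrite [LHS]Vmx_block !GHmx_scale !Gmx_scale Vmx_block !mulmx_block.
by rewrite !mul0mx !mulmx0 !addr0 !add0r.
Qed.

(* Every index but [qrep] contributes [t ^ 0], by [wtD_odd] with offset [m]. *)
Lemma prod_weights :
  (\prod_q roww 0 0 q * \prod_q roww m 0 q) * (\prod_q colwF 0 q * \prod_q colwR 0 q)
  = t ^ (wt s rho - wt s m).
Proof.
have hm b := @wtD_odd s b m (odd_msz s).
rewrite -!big_split /= (bigD1 (qrep s rho i)) //= big1 ?mulr1 => [|q hq].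
  rewrite !mxE /Fidx eqxx /qrep blk_mxvec_index inordK // -!expfzDr //; congr (_ ^ _).
  by have := hm rho; rewrite scale_exp_msz addn0; lia.
rewrite !mxE /Fidx (negbTE hq) -!expfzDr // -(expr0z t); congr (_ ^ _).
by have := hm (blk q); rewrite scale_exp_msz addn0; lia.
Qed.

Lemma Ddet_scale : Ddet at_ k rho i j = t ^ (wt s rho - wt s m) * Ddet a k rho i j.
Proof.
rewrite -!det_Lmx // -!det_Vmx Vmx_scale !det_mulmx !det_ublock !det_diag.
by rewrite -prod_weights mulrAC.
Qed.

End ScaledLinearization.

Unset Implicit Arguments.

Theorem mainTheorem8 (R : realFieldType) (n s N : nat) (hn : (1 <= n)%N)
  (hs : (1 <= s)%N) (hN : (1 <= N)%N)
  (a : nat -> 'I_(msz s) -> 'M[R]_n)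
  (hper : forall k, a (k + N)%N = a k)
  (k : nat) (i j : 'I_n) (l : nat) (hl : (l < s)%N) (t : R) (ht : 0 < t) :
  Ddet (scale_coef t a) k l.*2.+1 i j = t ^+ l / t ^+ s * Ddet a k l.*2.+1 i j.
Proof.
have t_neq0 : t != 0 by rewrite gt_eqF.
have rho_odd : odd l.*2.+1 by rewrite /= odd_double.
rewrite Ddet_scale // ?wt_msz_sub //; last by rewrite /msz ltnS ltn_double.
by rewrite /= uphalf_double expfzDr // -invr_expz -!exprnP.
Qed.
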